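(* Let $n=sk+r$ with integers $s\geq 2$, $k\geq 3$ and $1\leq r\leq k-1$. Then $t_2(n,k)\geq \chi(\overline{K}(n,k))$ in each of the following cases: (a) $k\geq 4$ and $s\geq 7$; (b) $k=3$ and $s\geq 17$; (c) $k\geq 7$ and $s=6$.
   Context: $\overline{K}(n,k)$ is the complement of the Kneser graph: its vertices are the $k$-element subsets of $[n]$, two distinct ones adjacent iff they intersect. $\chi$ is chromatic number. With $l=\lceil \frac{n-1}{2(k-1)}\rceil$, define $$t_2(n,k)=\sum_{i=1}^{\lceil n/2\rceil}\left\lfloor \frac{1}{l+1}\binom{n-i}{k-1}\right\rfloor.$$ *)

From mathcomp Require Import all_boot.
Set Implicit Arguments. Unset Strict Implicit. Unset Printing Implicit Defensive.

Definition colorable (V : finType) (adj : rel V) (c : nat) : bool :=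
  [exists f : {ffun V -> 'I_c}, forall x : V, forall y : V, adj x y ==> (f x != f y)].

Lemma colorable_card (V : finType) (adj : rel V) (Hirr : irreflexive adj) :
  exists c, colorable adj c.
Proof.
exists #|V|; apply/existsP; exists [ffun x => enum_rank x].
apply/forallP=> x; apply/forallP=> y; apply/implyP=> hxy; rewrite !ffunE.
apply/negP=> /eqP /enum_rank_inj exy; subst y.
by rewrite Hirr in hxy.
Qed.

Definition chromatic_number (V : finType) (adj : rel V) (Hirr : irreflexive adj) : nat :=
  ex_minn (colorable_card Hirr).

Definition ksubset (n k : nat) := {A : {set 'I_n} | #|A| == k}.

Definition cKneser_adj (n k : nat) : rel (ksubset n k) :=
  fun A B => (A != B) && (val A :&: val B != set0).

Lemma cKneser_irr (n k : nat) : irreflexive (@cKneser_adj n k).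
Proof. by move=> A; rewrite /cKneser_adj eqxx. Qed.

Definition chi_cKneser (n k : nat) : nat := chromatic_number (@cKneser_irr n k).

(* l = ceil((n-1) / (2(k-1))) *)
Definition l_param (n k : nat) : nat :=
  (n.-1 + (2 * k.-1).-1) %/ (2 * k.-1).

Definition t2 (n k : nat) : nat :=
  \sum_(1 <= i < (uphalf n).+1) 'C(n - i, k.-1) %/ (l_param n k).+1.

From mathcomp Require Import all_boot zify.
Set Implicit Arguments. Unset Strict Implicit. Unset Printing Implicit Defensive.

(* A proper colouring of the complement of K(n, k) is a partition of the k-subsets of [n]
   into families of pairwise disjoint sets.  When s k <= n and C(n, k) <= s t, Baranyai's
   argument gives t such families of at most s sets each: the points of [n] are added one
   at a time to C(n, k) slots grouped into t classes of at most s slots, and each step is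
   an integral rounding, by Hall's theorem with capacities, of the fractional assignment
   in which a slot still missing k - |S| of its points receives the new point with
   probability (k - |S|) / (number of points left).
   It then suffices that C(n, k) <= s t2(n, k).  By the hockey-stick identity, C(n, k) is
   the sum of the binomials rounded down in t2 plus C(n/2, k); the rounding loses at most
   ceil(n/2) l, and in the stated ranges both error terms are small against C(n, k), by
   2^k C(n/2, k) <= C(n, k) and l <= (n + 2k - 4) / (2k - 2). *)

(** * Hall's theorem with capacities *)

Section CapacitatedHall.

Variables (J C : finType) (E : J -> C -> bool).

Definition neighbours (X : {set J}) : {set C} := [set c | [exists j in X, E j c]].

Definition hall_condition (b : C -> nat) (A : {set J}) :=
  forall X : {set J}, X \subset A -> #|X| <= \sum_(c in neighbours X) b c.

Definition strict_hall_condition (b : C -> nat) (A : {set J}) :=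
  forall Y : {set J}, Y \subset A -> Y != set0 -> Y != A ->
    #|Y| < \sum_(c in neighbours Y) b c.

Definition capacitated_matching (b : C -> nat) (A : {set J}) (f : J -> C) :=
  {in A, forall j, E j (f j)} /\ forall c, #|[set j in A | f j == c]| <= b c.

Lemma neighboursP (X : {set J}) (c : C) :
  reflect (exists2 j, j \in X & E j c) (c \in neighbours X).
Proof.
by rewrite inE; apply: (iffP existsP) => [[j /andP[]]|[j]]; exists j => //; apply/andP.
Qed.

Lemma neighbours1 (j : J) (c : C) : (c \in neighbours [set j]) = E j c.
Proof. by apply/neighboursP/idP => [[i /set1P ->]|]; last exists j; rewrite ?set11. Qed.

Lemma matching_in_neighbours b A f (c : C) (j : J) :
  capacitated_matching b A f -> j \in A -> f j = c -> c \in neighbours A.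
Proof. by case=> Ef _ jA <-; apply/neighboursP; exists j; rewrite ?Ef. Qed.

Section TightSet.

Variables (b : C -> nat) (A X : {set J}).
Hypotheses (XA : X \subset A) (tightX : #|X| = \sum_(c in neighbours X) b c).

Definition cap_outside (c : C) := if c \in neighbours X then 0 else b c.

Lemma hall_condition_tight : hall_condition b A -> hall_condition cap_outside (A :\: X).
Proof.
move=> hallA Y YAX.
have [YA disjYX] := subsetDP YAX.
have YXA : Y :|: X \subset A by rewrite subUset XA YA.
have := hallA _ YXA; rewrite cardsU (disjoint_setI0 disjYX) cards0 subn0 tightX.
suff: \sum_(c in neighbours (Y :|: X)) b c <=
      \sum_(c in neighbours Y) cap_outside c + \sum_(c in neighbours X) b c by lia.
rewrite !(big_mkcond (mem (neighbours _))) -big_split /=; apply: leq_sum => c _.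
rewrite /cap_outside; case: (boolP (c \in neighbours X)) => XNc.
  by rewrite if_same add0n; case: ifP.
rewrite addn0; have [/neighboursP[j /setUP[jY|jX] Ejc]|//] := ifP.
  by rewrite ifT //; apply/neighboursP; exists j.
by case/negP: XNc; apply/neighboursP; exists j.
Qed.

Lemma matching_glue f1 f2 :
  capacitated_matching b X f1 -> capacitated_matching cap_outside (A :\: X) f2 ->
  capacitated_matching b A (fun j => if j \in X then f1 j else f2 j).
Proof.
move=> M1 M2; case: (M1) (M2) => [E1 F1] [E2 F2]; split=> [j jA|c].
  by case: ifP => jX; [exact: E1 | apply: E2; rewrite !inE jX].
have sub : [set j in A | (if j \in X then f1 j else f2 j) == c] \subset
           [set j in X | f1 j == c] :|: [set j in A :\: X | f2 j == c].
  by apply/subsetP => j; rewrite !inE; case: (j \in X) => /andP[-> ->]; rewrite ?orbT.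
apply: leq_trans (subset_leq_card sub) (leq_trans (leq_card_setU _ _) _).
have := F2 c; rewrite /cap_outside; case: ifP => [_ | XNc].
  by rewrite leqn0 => /eqP->; rewrite addn0.
rewrite (_ : [set j in X | f1 j == c] = set0) ?cards0 //.
apply/setP => j; rewrite !inE; apply/negbTE; apply/andP => -[jX /eqP f1j].
by rewrite (matching_in_neighbours M1 jX f1j) in XNc.
Qed.

End TightSet.

Section SlackSet.

Variables (b : C -> nat) (A : {set J}) (j0 : J) (c1 : C).
Hypotheses (j0A : j0 \in A) (Ej0c1 : E j0 c1) (bc1 : 0 < b c1).

Definition cap_dec (c : C) := b c - (c == c1).

Lemma hall_condition_slack :
  strict_hall_condition b A -> hall_condition cap_dec (A :\ j0).
Proof.
move=> slack Y YA; have [->|Y0] := eqVneq Y set0; first by rewrite cards0.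
have YnA : Y != A by apply: contraTneq YA => ->; rewrite subsetD1 j0A andbF.
have := slack Y (subset_trans YA (subsetDl _ _)) Y0 YnA.
suff: \sum_(c in neighbours Y) b c <= \sum_(c in neighbours Y) cap_dec c + 1 by lia.
rewrite (eq_bigr (fun c => cap_dec c + (c == c1))); last first.
  by move=> c _; rewrite /cap_dec subnK //; case: eqP => [->|].
rewrite big_split leq_add2l /=.
apply: leq_trans (_ : \sum_c (c == c1) <= 1).
  by rewrite [X in _ <= X](bigID (mem (neighbours Y))) leq_addr.
by rewrite (bigD1 c1) //= eqxx big1 // => c /negbTE ->.
Qed.

Lemma matching_extend f :
  capacitated_matching cap_dec (A :\ j0) f ->
  capacitated_matching b A (fun j => if j == j0 then c1 else f j).
Proof.
case=> Ef Ff; split=> [j jA|c].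
  by case: eqP => [->|/eqP jj0] //; apply: Ef; rewrite !inE jj0.
have sub : [set j in A | (if j == j0 then c1 else f j) == c] \subset
           [set j | (j == j0) && (c1 == c)] :|: [set j in A :\ j0 | f j == c].
  by apply/subsetP => j; rewrite !inE; case: (j == j0) => /andP[-> ->]; rewrite ?orbT.
apply: leq_trans (subset_leq_card sub) (leq_trans (leq_card_setU _ _) _).
have -> : b c = (c1 == c) + cap_dec c by rewrite /cap_dec eq_sym; case: (c =P c1) => [->|_]; lia.
apply: leq_add (Ff c); case: (c1 == c).
  by rewrite (_ : [set j | _] = [set j0]) ?cards1 //; apply/setP => j; rewrite !inE andbT.
by rewrite leqn0 cards_eq0; apply/eqP/setP => j; rewrite !inE andbF.
Qed.

End SlackSet.

Theorem capacitated_hall (c0 : C) (b : C -> nat) (A : {set J}) :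
  hall_condition b A -> exists f, capacitated_matching b A f.
Proof.
have [N] := ubnP #|A|; elim: N A b => // N IH A b /ltnSE AN hallA.
have [A0|[j0 j0A]] := set_0Vmem A.
  exists (fun _ => c0); split=> [j|c]; first by rewrite A0 inE.
  by rewrite A0 (eq_card0 (fun j => _)) //= => j; rewrite !inE.
case: (boolP [exists X : {set J}, [&& X \subset A, X != set0, X != A &
                #|X| == \sum_(c in neighbours X) b c]]).
  case/existsP=> X /and4P[XA X0 XA' /eqP tightX].
  have [f1 M1] : exists f, capacitated_matching b X f.
    apply: IH => [|Y YX]; last exact/hallA/(subset_trans YX).
    by apply: leq_trans AN; apply: proper_card; rewrite properEneq XA' XA.
  have [f2 M2] : exists f, capacitated_matching (cap_outside b X) (A :\: X) f.
    apply: IH; last exact: hall_condition_tight.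
    rewrite -(cardsID X A) (setIidPr XA) in AN.
    by apply: leq_trans AN; rewrite -add1n leq_add2r card_gt0.
  by exists (fun j => if j \in X then f1 j else f2 j); apply: matching_glue.
rewrite negb_exists => /forallP noTight.
have slack : strict_hall_condition b A.
  by move=> Y YA Y0 YA'; have := noTight Y; rewrite YA Y0 YA' ltn_neqAle hallA ?andbT.
have [c1 Ej0c1 bc1] : exists2 c1, E j0 c1 & 0 < b c1.
  have := hallA [set j0]; rewrite sub1set j0A cards1 => /(_ isT).
  rewrite lt0n sum_nat_eq0 negb_forall => /existsP[c1]; rewrite negb_imply.
  by case/andP; rewrite neighbours1 -lt0n; exists c1.
have [f M] : exists f, capacitated_matching (cap_dec b c1) (A :\ j0) f.
  apply: IH; first by rewrite (cardsD1 j0 A) j0A in AN.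
  exact: hall_condition_slack.
by exists (fun j => if j == j0 then c1 else f j); apply: matching_extend.
Qed.

End CapacitatedHall.

Lemma leq_sum_eq (I : finType) (x y : I -> nat) :
  (forall i, x i <= y i) -> \sum_i x i = \sum_i y i -> x =1 y.
Proof.
move=> xy sumxy i; apply/eqP; rewrite eqn_leq xy /=.
have : \sum_i (y i - x i) == 0 by rewrite sumnB // sumxy subnn.
by rewrite sum_nat_eq0 => /forallP/(_ i); rewrite subn_eq0.
Qed.

Lemma sum_card_fibres (J C : finType) (f : J -> C) : \sum_c #|[set j | f j == c]| = #|J|.
Proof.
rewrite -sum1_card (partition_big f xpredT) //=; apply: eq_bigr => c _.
by rewrite -sum1dep_card.
Qed.

Lemma transportation_assignment (J C : finType) (c0 : C) (w : J -> C -> nat) (D : nat)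
    (b : C -> nat) :
  0 < D -> (forall j, \sum_c w j c = D) -> (forall c, \sum_j w j c = D * b c) ->
  exists f : J -> C, (forall j, 0 < w j (f j)) /\ (forall c, #|[set j | f j == c]| = b c).
Proof.
move=> D0 rowD colD; pose E j c := 0 < w j c.
have hall : hall_condition E b [set: J].
  move=> X _; rewrite -(leq_pmul2l D0) mulnC -sum_nat_const.
  rewrite big_distrr -(eq_bigr _ (fun c _ => colD c)) /=.
  have supp j : j \in X -> \sum_c w j c = \sum_(c in neighbours E X) w j c.
    move=> jX; rewrite [LHS](bigID (mem (neighbours E X))) /= [X in _ + X]big1 ?addn0 // => c XNc.
    apply/eqP; apply: contraNT XNc; rewrite -lt0n => wjc.
    by apply/neighboursP; exists j.
  rewrite (eq_bigr _ (fun j jX => esym (rowD j))) (eq_bigr _ supp) exchange_big /=.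
  by apply: leq_sum => c _; rewrite [X in _ <= X](bigID (mem X)) leq_addr.
have [f [Ef Ff]] := capacitated_hall c0 hall.
exists f; split=> [j|]; first exact: Ef.
have fibre_le c : #|[set j | f j == c]| <= b c.
  by have := Ff c; rewrite setIdE setTI.
apply: leq_sum_eq fibre_le _; rewrite sum_card_fibres; apply/eqP.
rewrite -(eqn_pmul2l D0) big_distrr -(eq_bigr _ (fun c _ => colD c)) exchange_big /=.
by rewrite (eq_bigr _ (fun j _ => rowD j)) sum_nat_const mulnC.
Qed.

(** * Baranyai's construction *)

Lemma binS_pred a b : 0 < a -> 0 < b -> 'C(a, b) = 'C(a.-1, b) + 'C(a.-1, b.-1).
Proof. by case: a b => [|a] [|b] //= _ _; rewrite binS. Qed.

Section Baranyai.

Variables n k s t : nat.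
Hypotheses (s_gt0 : 0 < s) (sk_le_n : s * k <= n)
  (bin_le_st : 'C(n, k) <= s * t).

Local Notation N := 'C(n, k).

Lemma slot_class_subproof (p : 'I_N) : p %/ s < t.
Proof. by rewrite ltn_divLR // mulnC (leq_trans (ltn_ord p)). Qed.

Definition slot_class (p : 'I_N) : 'I_t := Ordinal (slot_class_subproof p).

Lemma card_slot_class (j : 'I_t) : #|[set p | slot_class p == j]| <= s.
Proof.
pose rem (p : 'I_N) : 'I_s := Ordinal (ltn_pmod p s_gt0).
have rem_inj : {in [set p | slot_class p == j] &, injective rem}.
  move=> p q; rewrite !inE => /eqP pj /eqP qj [pq].
  have /(congr1 val) /= pqdiv : slot_class p = slot_class q by rewrite pj qj.
  by apply: val_inj; rewrite /= (divn_eq p s) (divn_eq q s) pq pqdiv.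
by rewrite -(card_in_imset rem_inj) (leq_trans (max_card _)) ?card_ord.
Qed.

Definition below m : {set 'I_n} := [set i : 'I_n | i < m].

(* Slot p carries g p, the trace on [0, m) of the k-set it will eventually hold.  Each S
   occurs as a trace exactly as often as it is the trace of a k-subset of 'I_n, and the
   points still missing in a class fit among the n - m points not yet placed. *)
Record partial_baranyai m (g : 'I_N -> {set 'I_n}) : Prop := PartialBaranyai {
  baranyai_sub : forall p, g p \subset below m;
  baranyai_disjoint : forall p q, p != q -> slot_class p = slot_class q -> [disjoint g p & g q];
  baranyai_count : forall S : {set 'I_n}, S \subset below m ->
    #|[set p | g p == S]| = if #|S| <= k then 'C(n - m, k - #|S|) else 0;
  baranyai_deficit : forall j, \sum_(p | slot_class p == j) (k - #|g p|) <= n - m }.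

Lemma partial_baranyai0 : partial_baranyai 0 (fun _ => set0).
Proof.
split=> [p|p q _ _|S S0|j]; first exact: sub0set.
- by rewrite -setI_eq0 setI0.
- have -> : S = set0 by apply/setP => i; rewrite inE; apply/negP => /(subsetP S0); rewrite inE.
  by rewrite cards0 !subn0 leq0n -[RHS]card_ord -cardsT; apply: eq_card => p; rewrite !inE eqxx.
- rewrite (eq_bigr (fun _ => k)) => [|p _]; last by rewrite cards0 subn0.
  by rewrite sum_nat_cond_const subn0 (leq_trans _ sk_le_n) // leq_mul2r card_slot_class orbT.
Qed.

Section Step.

Variables (m : nat) (g : 'I_N -> {set 'I_n}).
Hypotheses (m_lt_n : m < n) (Hg : partial_baranyai m g).

Local Notation D := (n - m).
Let new : 'I_n := Ordinal m_lt_n.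

Lemma new_notin p : new \notin g p.
Proof. by apply/negP => /(subsetP (baranyai_sub Hg p)); rewrite inE ltnn. Qed.

Lemma trace_neqT p : g p != setT.
Proof. by apply: contraNneq (new_notin p) => ->; rewrite inE. Qed.

Definition deficit (j : 'I_t) := \sum_(p | slot_class p == j) (k - #|g p|).

Definition class_count (j : 'I_t) (S : {set 'I_n}) :=
  #|[set p | (slot_class p == j) && (g p == S)]|.

Definition new_count (S : {set 'I_n}) :=
  if (S \subset below m) && (#|S| < k) then 'C(D.-1, (k - #|S|).-1) else 0.

(* Among the slots with trace S, a proportion (k - |S|) / D must receive the point m,
   that is new_count S of them.  Rows of step_weight are classes; the column setT, never
   a trace since it contains m, absorbs the classes that do not receive m.  Rows sum to D
   and columns to D times step_capacity, so a rounding picks one column per class. *)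
Definition step_weight (j : 'I_t) (S : {set 'I_n}) :=
  if S == setT then D - deficit j else class_count j S * (k - #|S|).

Definition step_capacity (S : {set 'I_n}) :=
  if S == setT then t - \sum_(S' | S' != setT) new_count S' else new_count S.

Lemma deficitE j : deficit j = \sum_(S | S != setT) class_count j S * (k - #|S|).
Proof.
rewrite /deficit (partition_big g (fun S => S != setT)) => [|p _]; last exact: trace_neqT.
apply: eq_bigr => S _; rewrite (eq_bigr (fun _ => k - #|S|)) => [|p /andP[_ /eqP->]] //.
by rewrite sum_nat_cond_const.
Qed.

Lemma sum_class_count (S : {set 'I_n}) : \sum_j class_count j S = #|[set p | g p == S]|.
Proof.
rewrite -sum1dep_card (partition_big slot_class xpredT) //=.
apply: eq_bigr => j _; rewrite sum1dep_card /class_count.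
by apply: eq_card => p; rewrite !inE andbC.
Qed.

Lemma step_weight_row j : \sum_S step_weight j S = D.
Proof.
rewrite (bigD1 setT) //= /step_weight eqxx.
rewrite (eq_bigr (fun S => class_count j S * (k - #|S|))) => [|S /negbTE-> //].
by rewrite -deficitE subnK // (baranyai_deficit Hg).
Qed.

Lemma step_weight_col_proper (S : {set 'I_n}) :
  S != setT -> \sum_j step_weight j S = D * new_count S.
Proof.
move=> ST; rewrite /step_weight (negbTE ST) -big_distrl /= sum_class_count /new_count.
have [SL|SNL] /= := boolP (S \subset below m); last first.
  rewrite (_ : [set p | g p == S] = set0) ?cards0 ?mul0n ?muln0 //.
  by apply/setP => p; rewrite !inE; apply: contraNF SNL => /eqP <-; exact: (baranyai_sub Hg).
rewrite (baranyai_count Hg) //; case: ltngtP => [Sk||->]; rewrite ?subnn ?muln0 //.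
by rewrite mul_bin_diag prednK ?subn_gt0 // mulnC.
Qed.

Lemma step_weight_col (S : {set 'I_n}) : \sum_j step_weight j S = D * step_capacity S.
Proof.
rewrite /step_capacity; case: eqP => [->|/eqP ST]; last exact: step_weight_col_proper.
rewrite /step_weight eqxx sumnB => [|j _]; last exact: (baranyai_deficit Hg).
rewrite sum_nat_const card_ord [t * _]mulnC [RHS]mulnBr; congr (_ - _).
rewrite (eq_bigr _ (fun j _ => deficitE j)) exchange_big big_distrr /=.
apply: eq_bigr => U UT; rewrite -step_weight_col_proper //.
by apply: eq_bigr => j _; rewrite /step_weight (negbTE UT).
Qed.

Section Extension.

Variable f : 'I_t -> {set 'I_n}.
Hypotheses (f_weight : forall j, 0 < step_weight j (f j))
  (f_fibre : forall S, #|[set j | f j == S]| = step_capacity S).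

Definition chosen_slot (j : 'I_t) := [pick p | (slot_class p == j) && (g p == f j)].

Definition extended (p : 'I_N) := chosen_slot (slot_class p) == Some p.

Definition next_trace (p : 'I_N) := if extended p then new |: g p else g p.

Lemma chosen_slotP j p : chosen_slot j = Some p -> slot_class p = j /\ g p = f j.
Proof. by rewrite /chosen_slot; case: pickP => // q /andP[/eqP <- /eqP <-] [<-]. Qed.

Lemma extended_exists j : f j != setT -> exists2 p, slot_class p = j & extended p.
Proof.
move=> fjT; rewrite /extended; case chosen: (chosen_slot j) => [p|].
  by have [pj _] := chosen_slotP chosen; exists p; rewrite pj ?chosen.
have := f_weight j; rewrite /step_weight (negbTE fjT) muln_gt0 card_gt0 => /andP[/set0Pn[p]].
rewrite inE => pj _; move: chosen; rewrite /chosen_slot.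
by case: pickP => // /(_ p); rewrite pj.
Qed.

Lemma extendedP p : extended p -> g p = f (slot_class p) /\ #|g p| < k.
Proof.
move=> /eqP /chosen_slotP[_ gp]; split=> //.
have := f_weight (slot_class p).
by rewrite -gp /step_weight (negbTE (trace_neqT p)) muln_gt0 subn_gt0 => /andP[].
Qed.

Lemma extended_inj p q : extended p -> extended q -> slot_class p = slot_class q -> p = q.
Proof. by rewrite /extended => /eqP ep /eqP eq pq; move: ep; rewrite pq eq => -[]. Qed.

Lemma card_extended S : S != setT -> #|[set p | extended p && (g p == S)]| = new_count S.
Proof.
move=> ST; have := f_fibre S; rewrite /step_capacity (negbTE ST) => <-.
rewrite -(card_in_imset (f := slot_class)) => [|p q]; last first.
  by rewrite !inE => /andP[ep _] /andP[eq _]; apply: extended_inj.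
apply: eq_card => j; rewrite inE; apply/imsetP/eqP => [[p]|fjS].
  by rewrite inE => /andP[/extendedP[gp _] /eqP gpS] ->; rewrite -gp.
have [|p pj ep] := extended_exists (j := j); first by rewrite fjS.
by exists p; rewrite // inE ep -fjS -pj (proj1 (extendedP ep)) /=.
Qed.

Lemma in_next_trace p x : (x \in next_trace p) = (x == new) && extended p || (x \in g p).
Proof. by rewrite /next_trace; case: (extended p); rewrite ?inE ?andbT ?andbF. Qed.

Lemma next_trace_sub p : next_trace p \subset below m.+1.
Proof.
apply/subsetP => x; rewrite in_next_trace inE => /orP[/andP[/eqP-> _] //|].
by move/(subsetP (baranyai_sub Hg p)); rewrite inE => /ltnW.
Qed.

Lemma next_trace_disjoint p q :
  p != q -> slot_class p = slot_class q -> [disjoint next_trace p & next_trace q].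
Proof.
move=> pq cpq; rewrite -setI_eq0; apply/eqP/setP => x; rewrite !inE !in_next_trace.
have [->|_] /= := eqVneq x new.
  rewrite !(negbTE (new_notin _)) !orbF; apply/negbTE; apply: contra pq => /andP[ep eq].
  by rewrite (extended_inj ep eq cpq).
case xp: (x \in g p) => //=; exact: disjointFr (baranyai_disjoint Hg pq cpq) xp.
Qed.

Lemma next_trace_count_new (S : {set 'I_n}) : new \in S -> S \subset below m.+1 ->
  #|[set p | next_trace p == S]| = if #|S| <= k then 'C(n - m.+1, k - #|S|) else 0.
Proof.
move=> newS SL.
have SL' : S :\ new \subset below m.
  apply/subsetP => x; rewrite !inE => /andP[xnew /(subsetP SL)]; rewrite inE ltnS leq_eqVlt.
  by case/orP=> // /eqP xm; case/eqP: xnew; apply: val_inj.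
have -> : [set p | next_trace p == S] = [set p | extended p && (g p == S :\ new)].
  apply/setP => p; rewrite !inE /next_trace; case: (extended p) => /=.
    by apply/eqP/eqP => [<-|->]; rewrite ?setU1K ?new_notin ?setD1K.
  by apply: contraNF (new_notin p) => /eqP ->.
rewrite card_extended; last by apply: contraNneq (negbT (setD11 new S)) => ->; rewrite inE.
by rewrite /new_count SL' (cardsD1 new S) newS add1n !subnS.
Qed.

Lemma next_trace_count_old (S : {set 'I_n}) : new \notin S -> S \subset below m.+1 ->
  #|[set p | next_trace p == S]| = if #|S| <= k then 'C(n - m.+1, k - #|S|) else 0.
Proof.
move=> newNS SL.
have SL' : S \subset below m.
  apply/subsetP => x xS; have := subsetP SL x xS; rewrite !inE ltnS leq_eqVlt.
  case/orP=> [/eqP xm|//]; case/negP: newNS; suff -> : new = x by [].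
  exact: val_inj.
have -> : [set p | next_trace p == S] = [set p | g p == S] :\: [set p | extended p].
  apply/setP => p; rewrite !inE /next_trace; case: (extended p) => //=.
  by apply/negbTE; apply: contra newNS => /eqP <-; rewrite setU11.
have := cardsID [set p | extended p] [set p | g p == S].
rewrite (baranyai_count Hg) // (_ : _ :&: _ = [set p | extended p && (g p == S)]); last first.
  by apply/setP => p; rewrite !inE andbC.
rewrite card_extended; last by apply: contraNneq newNS => ->; rewrite inE.
rewrite /new_count SL' /= subnS; case: ltngtP => [Sk|_|->]; last by rewrite subnn !bin0; lia.
  by rewrite (@binS_pred (n - m)) ?subn_gt0 //; lia.
by move/eqP; rewrite addn_eq0 => /andP[_ /eqP].
Qed.

Lemma next_trace_count (S : {set 'I_n}) : S \subset below m.+1 ->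
  #|[set p | next_trace p == S]| = if #|S| <= k then 'C(n - m.+1, k - #|S|) else 0.
Proof. by case: (boolP (new \in S)) => [/next_trace_count_new|/next_trace_count_old]. Qed.

Lemma next_deficitE j :
  \sum_(p | slot_class p == j) (k - #|next_trace p|) + (f j != setT) = deficit j.
Proof.
have per_slot p : k - #|next_trace p| + extended p = k - #|g p|.
  rewrite /next_trace; case: (boolP (extended p)) => [ep|_]; last by rewrite addn0.
  by rewrite cardsU1 new_notin add1n subnS addn1 prednK // subn_gt0; case: (extendedP ep).
rewrite /deficit -(eq_bigr _ (fun p _ => per_slot p)) big_split /=; congr (_ + _).
have [fjT|fjT] /= := eqVneq (f j) setT.
  rewrite big1 // => p /eqP pj; case: (boolP (extended p)) => // /extendedP[gp _].
  by have := trace_neqT p; rewrite gp pj fjT eqxx.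
have [p pj ep] := extended_exists fjT.
rewrite (bigD1 p) ?pj //= ep big1 // => q /andP[/eqP qj qp].
by case: (boolP (extended q)) => // eq; case/eqP: qp; apply: extended_inj; rewrite // qj pj.
Qed.

Lemma next_trace_deficit j :
  \sum_(p | slot_class p == j) (k - #|next_trace p|) <= n - m.+1.
Proof.
have := next_deficitE j; have := baranyai_deficit Hg j; rewrite -/(deficit j).
have := f_weight j; rewrite /step_weight subnS; case: (f j == setT) => /=; lia.
Qed.

Lemma partial_baranyai_next : partial_baranyai m.+1 next_trace.
Proof.
split; [exact: next_trace_sub | exact: next_trace_disjoint | exact: next_trace_count |].
exact: next_trace_deficit.
Qed.

End Extension.

Lemma partial_baranyai_step : exists g', partial_baranyai m.+1 g'.
Proof.
have D_gt0 : 0 < n - m by rewrite subn_gt0.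
have [f [fw ff]] := transportation_assignment setT D_gt0 step_weight_row step_weight_col.
by exists (next_trace f); apply: partial_baranyai_next.
Qed.

End Step.

Lemma partial_baranyai_complete : exists g, partial_baranyai n g.
Proof.
suff: forall m, m <= n -> exists g, partial_baranyai m g by apply.
elim=> [|m IH] lemn; first by exists (fun _ => set0); exact: partial_baranyai0.
by have [g Hg] := IH (ltnW lemn); exact: partial_baranyai_step Hg.
Qed.

Lemma colorable_of_partial_baranyai g : partial_baranyai n g -> colorable (@cKneser_adj n k) t.
Proof.
case=> _ disj count _.
have slotP (A : ksubset n k) : exists p, g p == val A.
  have : 0 < #|[set p | g p == val A]|.
    rewrite count; last by apply/subsetP => i _; rewrite inE ltn_ord.
    by rewrite (eqP (valP A)) leqnn !subnn.
  by case/card_gt0P => p; rewrite inE; exists p.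
pose slot A := xchoose (slotP A).
apply/existsP; exists [ffun A => slot_class (slot A)].
apply/forallP => A; apply/forallP => B; apply/implyP => /andP[AB /set0Pn[x]].
rewrite inE => /andP[xA xB]; rewrite !ffunE; apply/eqP => same.
have /eqP gA := xchooseP (slotP A); have /eqP gB := xchooseP (slotP B).
have neq : slot A != slot B.
  by apply: contraNneq AB => eq; apply/eqP/val_inj; rewrite -gA -gB (congr1 g eq).
by have := disj _ _ neq same; rewrite -setI_eq0 => /eqP/setP/(_ x); rewrite !inE gA gB xA xB.
Qed.

End Baranyai.

Lemma chi_cKneser_le n k s t :
  0 < s -> s * k <= n -> 'C(n, k) <= s * t -> chi_cKneser n k <= t.
Proof.
move=> s_gt0 skn bin_le; rewrite /chi_cKneser /chromatic_number.
case: ex_minnP => c _ min_c; apply: min_c.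
have [g Hg] := partial_baranyai_complete s_gt0 skn bin_le.
exact: colorable_of_partial_baranyai Hg.
Qed.

(** * The inequality C(n, k) <= s t2(n, k) *)

Lemma bin_hockey_stick n k h : 0 < k -> h <= n ->
  \sum_(1 <= i < h.+1) 'C(n - i, k.-1) + 'C(n - h, k) = 'C(n, k).
Proof.
move=> k_gt0; elim: h => [|h IH] hn; first by rewrite big_geq // subn0.
rewrite big_nat_recr //= -addnA -IH ?(ltnW hn) //; congr (_ + _).
have -> : n - h = (n - h.+1).+1 by lia.
by case: k k_gt0 {IH} => // k _; rewrite binS addnC.
Qed.

Lemma t2_lower_bound n k : 0 < k ->
  'C(n, k) <= (l_param n k).+1 * t2 n k + (uphalf n * l_param n k + 'C(n./2, k)).
Proof.
move=> k_gt0; have half_le : uphalf n <= n by lia.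
rewrite -{1}(bin_hockey_stick k_gt0 half_le) (_ : n - uphalf n = n./2); last by lia.
rewrite addnA leq_add2r /t2 big_distrr /=.
have -> : uphalf n * l_param n k = \sum_(1 <= i < (uphalf n).+1) l_param n k.
  by rewrite sum_nat_const_nat subn1.
rewrite -big_split /=.
apply: leq_sum => i _; set x := 'C(n - i, k.-1); set L := (l_param n k).+1.
by rewrite {1}(divn_eq x L) mulnC leq_add2l -ltnS ltn_pmod.
Qed.

Lemma leq_mul_of_slack s L A T Y : 0 < L -> L <= s ->
  A <= L * T + Y -> s * Y <= (s - L) * A -> A <= s * T.
Proof. by move=> L_gt0 /subnKC <-; set d := s - L; nia. Qed.

Lemma split_bound P Q s d A B Z : 0 < P * Q ->
  P * B <= A -> Q * Z <= A -> s * Q + P <= d * (P * Q) -> s * B + Z <= d * A.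
Proof.
move=> PQ_gt0 hB hZ hd; rewrite -(leq_pmul2l PQ_gt0).
have -> : P * Q * (s * B + Z) = s * Q * (P * B) + P * (Q * Z) by lia.
apply: leq_trans (_ : s * Q * A + P * A <= _).
  by apply: leq_add; rewrite leq_mul2l ?hB ?hZ orbT.
by rewrite -mulnDl (leq_trans (leq_mul hd (leqnn A))) //; lia.
Qed.

Lemma expn2_bin_le_bin_double a k : 2 ^ k * 'C(a, k) <= 'C(a.*2, k).
Proof.
elim: k => [|k IH]; first by rewrite !bin0.
rewrite -(leq_pmul2l (ltn0Sn k)) mul_bin_left mulnCA mul_bin_left expnS -mulnA mulnCA.
have sub_le : 2 * (a - k) <= a.*2 - k by lia.
by move: (leq_mul sub_le IH); nia.
Qed.

Lemma expn2_bin_half_le n k : 2 ^ k * 'C(n./2, k) <= 'C(n, k).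
Proof. by apply: leq_trans (expn2_bin_le_bin_double _ _) (leq_bin2l _ _); lia. Qed.

Lemma leq_bin_half n i j : i <= j -> j.*2 <= n -> 'C(n, i) <= 'C(n, j).
Proof.
elim: j => [|j IH]; first by rewrite leqn0 => /eqP ->.
rewrite leq_eqVlt => /orP[/eqP -> // | ij] jn.
apply: leq_trans (IH ij _) _; first lia.
by rewrite -(leq_pmul2l (ltn0Sn j)) mul_bin_left leq_mul2r; apply/orP; right; lia.
Qed.

Lemma l_param_mul_le n k : 1 < k -> 0 < n -> l_param n k * (2 * k.-1) <= n + 2 * k.-1 - 2.
Proof. by move=> k_gt1 n_gt0; apply: leq_trans (leq_divM _ _) _; lia. Qed.

Lemma bin3E n : 'C(n, 3) * 6 = n * n.-1 * n.-2.
Proof. by rewrite (bin_ffact n 3) !ffactnS ffactn0 muln1 !mulnA. Qed.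

Lemma bin4E n : 'C(n, 4) * 24 = n * n.-1 * n.-2 * n.-2.-1.
Proof. by rewrite (bin_ffact n 4) !ffactnS ffactn0 muln1 !mulnA. Qed.

Lemma cubic_le n : 9 <= n -> n * (n + 1) * (n + 2) <= 2 * (n * n.-1 * n.-2).
Proof.
by move=> /subnK <-; set m := n - 9; rewrite !addnS !addn0 /=; nia.
Qed.

Lemma quartic_le n : 12 <= n -> 4 * (n * (n + 1) * (n + 4)) <= n * n.-1 * n.-2 * n.-2.-1.
Proof.
by move=> /subnK <-; set m := n - 12; rewrite !addnS !addn0 /=; nia.
Qed.

Definition t2_slack n s k :=
  0 < s - (l_param n k).+1 /\
  s * (uphalf n * l_param n k + 'C(n./2, k)) <= (s - (l_param n k).+1) * 'C(n, k).

Lemma bin_le_mul_t2_of_slack n s k : 0 < k -> t2_slack n s k -> 'C(n, k) <= s * t2 n k.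
Proof.
move=> k_gt0 [gap slack].
by apply: (leq_mul_of_slack (ltn0Sn _) _ (t2_lower_bound n k_gt0) slack); lia.
Qed.

Lemma t2_slack_k3 n s r : n = s * 3 + r -> 17 <= s -> 1 <= r <= 2 -> t2_slack n s 3.
Proof.
move=> en s17 hr; set l := l_param n 3.
have slack : s * 2 + 8 <= (s - l.+1) * (8 * 2) by rewrite /l /l_param /=; lia.
split; first lia.
rewrite mulnDr addnC; apply: (@split_bound 8 2) => //; first exact: expn2_bin_half_le.
have hl : l * 4 <= n + 2 by have := @l_param_mul_le n 3 isT; lia.
have hX : 3 * s * (2 * uphalf n) * (4 * l) <= n * (n + 1) * (n + 2).
  by apply: leq_mul; [apply: leq_mul|]; lia.
rewrite -(leq_pmul2l (isT : 0 < 12)).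
have -> : 12 * (2 * (s * (uphalf n * l))) = 3 * s * (2 * uphalf n) * (4 * l) by lia.
apply: (leq_trans hX); apply: (leq_trans (cubic_le _)); first lia.
by rewrite -bin3E; lia.
Qed.

Lemma l_param_gap n s k r : n = s * k + r -> r <= k - 1 -> 4 <= k -> 6 <= s ->
  (s = 6 -> 7 <= k) -> s <= 12 * (s - (l_param n k).+1).
Proof.
move=> en hr k4 s6 s6k; set l := l_param n k.
have hl : l * (2 * k.-1) <= s * k.-1 + s + 3 * k.-1 - 2.
  have sk : s * k = s * k.-1 + s by rewrite -mulnSr prednK //; lia.
  have := @l_param_mul_le n k (ltac:(lia)) (ltac:(lia)); rewrite -/l; lia.
have [s9|s8] := leqP 9 s; first by nia.
(* For s <= 8 only the integrality of l makes the bound work. *)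
have : l <= s - 2 by nia.
lia.
Qed.

Lemma t2_slack_k4 n s k r : n = s * k + r -> 4 <= k -> r <= k - 1 -> 6 <= s ->
  s <= 12 * (s - (l_param n k).+1) -> t2_slack n s k.
Proof.
move=> en k4 hr s6 slack; set l := l_param n k; set A := 'C(n, k).
split; first lia.
have k6 : 6 * k <= n by rewrite en (leq_trans _ (leq_addr _ _)) // leq_mul2r s6 orbT.
have s4 : 4 * s <= n by rewrite en (leq_trans _ (leq_addr _ _)) // mulnC leq_mul2l k4 orbT.
rewrite mulnDr addnC; apply: (@split_bound 16 8); [by [] | | | lia].
  apply: leq_trans _ (expn2_bin_half_le n k); rewrite leq_mul2r.
  by rewrite (leq_trans _ (leq_pexp2l (isT : 0 < 2) k4)) ?orbT.
have hl : 6 * l <= n + 4.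
  have := @l_param_mul_le n k (ltac:(lia)) (ltac:(lia)); rewrite -/l.
  have : 6 <= 2 * k.-1 by lia.
  nia.
have hX : 4 * s * (2 * uphalf n) * (6 * l) <= n * (n + 1) * (n + 4).
  by apply: leq_mul; [apply: leq_mul|]; lia.
have bin4_le : 'C(n, 4) <= A by apply: leq_bin_half; lia.
rewrite -(leq_pmul2l (isT : 0 < 24)).
have -> : 24 * (8 * (s * (uphalf n * l))) = 4 * (4 * s * (2 * uphalf n) * (6 * l)) by lia.
apply: leq_trans (leq_mul (leqnn 4) hX) _; apply: (leq_trans (quartic_le _)); first lia.
by rewrite -bin4E mulnC leq_mul2l bin4_le orbT.
Qed.

Theorem lemma4p2 (n s k r : nat) :
  n = s * k + r -> 2 <= s -> 3 <= k -> 1 <= r <= k - 1 ->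
  [\/ (4 <= k) && (7 <= s), (k == 3) && (17 <= s) | (7 <= k) && (s == 6)] ->
  chi_cKneser n k <= t2 n k.
Proof.
move=> en s2 k3 hr cases.
have slack : t2_slack n s k.
  case: cases => [/andP[k4 s7]|/andP[/eqP k_3 s17]|/andP[k7 /eqP s_6]].
  - by apply: t2_slack_k4 en _ _ _ (l_param_gap en _ _ _ _); lia.
  - by subst k; apply: t2_slack_k3 en s17 _; lia.
  - by apply: t2_slack_k4 en _ _ _ (l_param_gap en _ _ _ _); lia.
apply: (@chi_cKneser_le n k s); [lia | lia | apply: bin_le_mul_t2_of_slack slack; lia].
Qed.
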